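(* Let $n\ge 2$, $q=e^{2\pi i/6}$, and in $Q_n$ define $s_i=\frac{-1}{2q}(1+u_i+v_i+u_iv_i)$ for $1\le i\le n-1$. Then the $s_i$ satisfy $s_is_{i+1}s_i=s_{i+1}s_is_{i+1}$ for $1\le i\le n-2$, $s_is_j=s_js_i$ for $|i-j|\ge 2$, and $(s_i-q)(s_i+1)=0$ for all $i$. Moreover $s_1^{-1}=-\frac{q}{2}(1-u_1-v_1-u_1v_1)$ and $s_1^{-1}u_1s_1=u_1v_1$, $s_1^{-1}v_1s_1=u_1$, $s_1^{-1}u_2s_1=u_2v_1$, $s_1^{-1}v_2s_1=-u_1v_1v_2$.
   Context: $Q_n$ is the $\mathbb{C}$-algebra with generators $u_1,v_1,\dots,u_{n-1},v_{n-1}$ and relations: (G1) $u_i^2=v_i^2=-1$; (G2) $[u_i,v_j]=-1$ if $|i-j|\le 1$; (G3) $[u_i,v_j]=1$ if $|i-j|\ge 2$; (G4) $[u_i,u_j]=[v_i,v_j]=1$, where $[a,b]=aba^{-1}b^{-1}$. *)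

From HB Require Import structures.
From mathcomp Require Import all_boot all_order all_algebra all_field.
Set Implicit Arguments. Unset Strict Implicit. Unset Printing Implicit Defensive.
Import Order.TTheory GRing.Theory Num.Theory.
Local Open Scope ring_scope.

Definition gcomm (A : unitRingType) (a b : A) : A := a * b * a^-1 * b^-1.

(* q = e^{2 pi i / 6} = (1 + i sqrt 3)/2 in the algebraic complex numbers *)
Definition q6 : algC := (1 + 'i * sqrtC 3%:R) / 2%:R.

Definition Qn_rels (n : nat) (A : unitRingType) (u v : nat -> A) : Prop :=
  (forall i, (1 <= i <= n.-1)%N -> u i ^+ 2 = -1 /\ v i ^+ 2 = -1) /\
  (forall i j, (1 <= i <= n.-1)%N -> (1 <= j <= n.-1)%N ->
     (i <= j.+1)%N -> (j <= i.+1)%N -> gcomm (u i) (v j) = -1) /\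
  (forall i j, (1 <= i <= n.-1)%N -> (1 <= j <= n.-1)%N ->
     ((i.+2 <= j)%N || (j.+2 <= i)%N) -> gcomm (u i) (v j) = 1) /\
  (forall i j, (1 <= i <= n.-1)%N -> (1 <= j <= n.-1)%N ->
     gcomm (u i) (u j) = 1 /\ gcomm (v i) (v j) = 1).

Definition s_gen (A : unitAlgType algC) (u v : nat -> A) (i : nat) : A :=
  (- (2%:R * q6)^-1) *: (1 + u i + v i + u i * v i).

(* Up to the scalar -1/(2q), s_i is X_i = 1 + u_i + v_i + u_i v_i.  The elements
   u_i, v_i, u_j, v_j square to -1 and pairwise commute or anticommute, so every
   product of them is, up to sign, a strictly increasing word in them: a
   Clifford-type normal form.  Each identity between the X's and the generators
   (the braid relation, X_i^2 = 2 X_i - 4, X_i (1 - u_i - v_i - u_i v_i) = 4, the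
   conjugation formulas) therefore reduces to comparing normal forms, which is
   computed by reflection.  The scalar identities all come from q^2 - q + 1 = 0. *)

From HB Require Import structures.
From mathcomp Require Import all_boot all_order all_algebra all_field.
From mathcomp Require Import ring zify.
Import Order.TTheory GRing.Theory Num.Theory.
Local Open Scope ring_scope.

Set Implicit Arguments.
Unset Strict Implicit.
Unset Printing Implicit Defensive.

Section SignedWordNormalForm.

Variable anti : nat -> nat -> bool.

(* Multiplies an increasing word on the left by g m; the boolean is the sign
   picked up, and a repeated generator cancels through g m * g m = -1. *)
Fixpoint insert_word (m : nat) (w : seq nat) : bool * seq nat :=
  match w with
  | [::] => (false, [:: m])
  | j :: w' =>
    if (m < j)%N then (false, m :: w)
    else if m == j then (true, w')
    else let: (b, w'') := insert_word m w' in (anti j m (+) b, j :: w'')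
  end.

Fixpoint norm_word (w : seq nat) : bool * seq nat :=
  if w is m :: w' then
    let: (b, w1) := norm_word w' in
    let: (c, w2) := insert_word m w1 in (b (+) c, w2)
  else (false, [::]).

Definition wpoly := seq (int * seq nat).

Definition norm_term (t : int * seq nat) : int * seq nat :=
  let: (b, w) := norm_word t.2 in (t.1 * (-1) ^+ b, w).

Fixpoint add_term (t : int * seq nat) (p : wpoly) : wpoly :=
  if p is s :: p' then
    if t.2 == s.2 then (t.1 + s.1, s.2) :: p' else s :: add_term t p'
  else [:: t].

Definition norm_wpoly (p : wpoly) : wpoly :=
  foldr (fun t => add_term (norm_term t)) [::] p.

Definition wpoly_mul (p q : wpoly) : wpoly :=
  [seq (t.1 * s.1, t.2 ++ s.2) | t <- p, s <- q].

Definition wpoly_sub (p q : wpoly) : wpoly := p ++ [seq (- t.1, t.2) | t <- q].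

Definition wpoly_eqb (p q : wpoly) : bool :=
  all (fun t => t.1 == 0) (norm_wpoly (wpoly_sub p q)).

Variables (A : pzRingType) (g : nat -> A).

Definition gword (w : seq nat) : A := \prod_(m <- w) g m.

Definition peval (p : wpoly) : A := \sum_(t <- p) t.1%:~R * gword t.2.

Lemma gword_cat w1 w2 : gword (w1 ++ w2) = gword w1 * gword w2.
Proof. exact: big_cat. Qed.

Lemma peval_cat p q : peval (p ++ q) = peval p + peval q.
Proof. exact: big_cat. Qed.

Lemma peval_mul p q : peval (wpoly_mul p q) = peval p * peval q.
Proof.
rewrite /peval big_allpairs_dep mulr_suml; apply: eq_bigr => t _.
rewrite mulr_sumr; apply: eq_bigr => s _.
by rewrite intrM gword_cat -!mulrA; congr (_ * _); rewrite !mulrA commr_int.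
Qed.

Lemma peval_sub p q : peval (wpoly_sub p q) = peval p - peval q.
Proof.
rewrite peval_cat /peval big_map -sumrN; congr (_ + _).
by apply: eq_bigr => t _; rewrite intrN mulNr.
Qed.

Definition xpoly (m0 m1 : nat) : wpoly :=
  [:: (1, [::]); (1, [:: m0]); (1, [:: m1]); (1, [:: m0; m1])].

Definition ypoly (m0 m1 : nat) : wpoly :=
  [:: (1, [::]); (-1, [:: m0]); (-1, [:: m1]); (-1, [:: m0; m1])].

Lemma peval_xpoly m0 m1 : peval (xpoly m0 m1) = 1 + g m0 + g m1 + g m0 * g m1.
Proof.
by rewrite /peval /gword !big_cons !big_nil /= !mul1r !mulr1 addr0 !addrA.
Qed.

Lemma peval_ypoly m0 m1 : peval (ypoly m0 m1) = 1 - g m0 - g m1 - g m0 * g m1.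
Proof.
by rewrite /peval /gword !big_cons !big_nil /= !mul1r !mulr1 !mulN1r addr0 !addrA.
Qed.

Lemma peval_mono (c : int) w : peval [:: (c, w)] = c%:~R * gword w.
Proof. by rewrite /peval big_seq1. Qed.

Lemma peval_add_term t p : peval (add_term t p) = t.1%:~R * gword t.2 + peval p.
Proof.
elim: p => [|s p IHp] /=; first by rewrite /peval big_seq1 big_nil addr0.
case: eqP => [->|_]; rewrite /peval !big_cons //=.
  by rewrite intrD mulrDl addrA.
by rewrite -/(peval _) IHp addrCA.
Qed.

Lemma peval_all0 p : all (fun t => t.1 == 0) p -> peval p = 0.
Proof.
move=> /allP p0; rewrite /peval big_seq big1 // => t /p0 /eqP ->.
by rewrite mul0r.
Qed.

Hypothesis g_sq : forall m, g m * g m = -1.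
Hypothesis g_comm : forall m' m, (m' < m)%N -> g m * g m' = (-1) ^+ anti m' m * (g m' * g m).

Lemma mulr_signCA b (x y : A) : x * ((-1) ^+ b * y) = (-1) ^+ b * (x * y).
Proof. by rewrite mulrA (commr_sign x) mulrA. Qed.

Lemma gword_insert m w :
  g m * gword w = (-1) ^+ (insert_word m w).1 * gword (insert_word m w).2.
Proof.
elim: w => [|j w IHw] /=; first by rewrite mul1r /gword big_seq1 big_nil mulr1.
case: ltngtP => [mj|jm|<-]; rewrite /gword ?big_cons /= -/(gword _) ?mul1r //.
  move: IHw; case: insert_word => b w' /= IHw.
  rewrite mulrA g_comm // -mulrA -(mulrA (g j)) IHw mulr_signCA mulrA -signr_addb.
  by rewrite /gword big_cons.
by rewrite mulrA g_sq mulN1r.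
Qed.

Lemma gword_norm w : gword w = (-1) ^+ (norm_word w).1 * gword (norm_word w).2.
Proof.
elim: w => [|m w IHw] /=; first by rewrite mul1r.
move: IHw (gword_insert m (norm_word w).2).
case: norm_word => b w1 /= IHw; case: insert_word => c w2 /= Hins.
by rewrite /gword big_cons -/(gword _) IHw mulr_signCA Hins mulrA signr_addb.
Qed.

Lemma peval_norm p : peval (norm_wpoly p) = peval p.
Proof.
elim: p => [|t p IHp] //=.
rewrite peval_add_term IHp /peval big_cons -/(peval _); congr (_ + _).
rewrite /norm_term (gword_norm t.2); case: norm_word => b w /=.
by rewrite intrM intr_sign -mulrA.
Qed.

Lemma wpoly_eqbP p q : wpoly_eqb p q -> peval p = peval q.
Proof.
by move=> pq; apply/eqP; rewrite -subr_eq0 -peval_sub -peval_norm peval_all0.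
Qed.

End SignedWordNormalForm.

Lemma sign_commC (R : pzRingType) (b : bool) (x y : R) :
  x * y = (-1) ^+ b * (y * x) -> y * x = (-1) ^+ b * (x * y).
Proof. by move->; rewrite mulrA -signr_addb addbb mul1r. Qed.

Lemma invr_sqrN1 (R : unitRingType) (z : R) : z * z = -1 -> z^-1 = - z.
Proof.
move=> zz; have zU : z \is a GRing.unit.
  by apply/unitrP; exists (- z); rewrite mulrN mulNr zz opprK.
by rewrite -(mulKr zU (- z)) mulrN zz opprK mulr1.
Qed.

Lemma gcomm_sign (R : unitRingType) (b : bool) (x y : R) :
  x * x = -1 -> y * y = -1 -> gcomm x y = (-1) ^+ b -> y * x = (-1) ^+ b * (x * y).
Proof.
move=> xx yy; rewrite /gcomm (invr_sqrN1 xx) (invr_sqrN1 yy) !(mulrN, mulNr) opprK => xyxy.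
have -> : y * x = x * (x * y * x * y) * y.
  by rewrite !mulrA xx -mulrA yy mulrN1 mulN1r mulNr opprK.
by rewrite xyxy (commr_sign x) -mulrA.
Qed.

Lemma gcomm_eq1 (R : unitRingType) (x y : R) :
  x * x = -1 -> y * y = -1 -> gcomm x y = 1 -> y * x = x * y.
Proof. by move=> xx yy c; rewrite (@gcomm_sign _ false) ?mul1r. Qed.

Definition near (i j : nat) : bool := (i <= j.+1)%N && (j <= i.+1)%N.

Lemma nearC i j : near i j = near j i.
Proof. by rewrite /near andbC. Qed.

Lemma near_refl i : near i i.
Proof. by rewrite /near leqnSn. Qed.

Lemma near_succ i : near i i.+1.
Proof. by rewrite /near leqnn (leqW (leqnSn i)). Qed.

Lemma near_far i j : ((i.+2 <= j)%N || (j.+2 <= i)%N) -> near i j = false.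
Proof. by case/orP=> h; apply/negbTE; rewrite negb_and -!ltnNge h ?orbT. Qed.

Section QnRelations.

Variables (n : nat) (A : unitRingType) (u v : nat -> A).
Hypothesis rels : Qn_rels n u v.

Local Notation in_range i := (1 <= i <= n.-1)%N.

Lemma Qn_u_sq i : in_range i -> u i * u i = -1.
Proof. by case: rels => sq _ /sq[<- _]. Qed.

Lemma Qn_v_sq i : in_range i -> v i * v i = -1.
Proof. by case: rels => sq _ /sq[_ <-]. Qed.

Lemma Qn_vu i j : in_range i -> in_range j -> v j * u i = (-1) ^+ near i j * (u i * v j).
Proof.
move=> hi hj; apply: gcomm_sign; rewrite ?Qn_u_sq ?Qn_v_sq //.
case: rels => _ [anti [comm _]]; case nij: (near i j).
  by case/andP: nij => h1 h2; rewrite anti.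
rewrite comm ?expr0 //; apply: contraFT nij.
by rewrite negb_or -!leqNgt => /andP[h1 h2]; rewrite /near h1 h2.
Qed.

Lemma Qn_uu i j : in_range i -> in_range j -> u j * u i = u i * u j.
Proof.
move=> hi hj; case: rels => _ [_ [_ /(_ i j hi hj)[c _]]].
by apply: gcomm_eq1; rewrite ?Qn_u_sq.
Qed.

Lemma Qn_vv i j : in_range i -> in_range j -> v j * v i = v i * v j.
Proof.
move=> hi hj; case: rels => _ [_ [_ /(_ i j hi hj)[_ c]]].
by apply: gcomm_eq1; rewrite ?Qn_v_sq.
Qed.

Definition qgen (i j m : nat) : A :=
  match m with 0 => u i | 1 => v i | 2 => u j | _ => v j end%N.

(* The generators qgen i j m' and qgen i j m (m' < m) anticommute iff one is a
   u and the other a v, and either they carry the same index or b = near i j. *)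
Definition qsign (b : bool) (m' m : nat) : bool :=
  [&& ((m' == 1) || (2 < m')) != ((m == 1) || (2 < m)) & b || ((1 < m') == (1 < m))]%N.

Lemma Qn_wpoly_eq (b : bool) i j p q :
  in_range i -> in_range j -> near i j = b -> wpoly_eqb (qsign b) p q ->
  peval (qgen i j) p = peval (qgen i j) q.
Proof.
move=> hi hj nij; apply: wpoly_eqbP.
  by case=> [|[|[|m]]] /=; rewrite ?Qn_u_sq ?Qn_v_sq.
case=> [|[|[|m']]] [|[|[|m]]] //= _; rewrite /qsign /= ?orbT ?orbF ?expr0 ?mul1r //.
- by rewrite Qn_vu // near_refl.
- by rewrite Qn_uu.
- by rewrite Qn_vu // nij.
- by apply: sign_commC; rewrite Qn_vu // nearC nij.
- by rewrite Qn_vv.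
- by rewrite Qn_vu // near_refl.
Qed.

Definition xuv i := 1 + u i + v i + u i * v i.
Definition yuv i := 1 - u i - v i - u i * v i.

Lemma xuv_braid i : in_range i -> in_range i.+1 ->
  xuv i * xuv i.+1 * xuv i = xuv i.+1 * xuv i * xuv i.+1.
Proof.
move=> hi hi1.
have := Qn_wpoly_eq
  (p := wpoly_mul (wpoly_mul (xpoly 0 1) (xpoly 2 3)) (xpoly 0 1))
  (q := wpoly_mul (wpoly_mul (xpoly 2 3) (xpoly 0 1)) (xpoly 2 3)) hi hi1 (near_succ i).
by rewrite !peval_mul !peval_xpoly; apply; vm_compute.
Qed.

Lemma xuv_comm i j : in_range i -> in_range j -> ((i.+2 <= j) || (j.+2 <= i))%N ->
  xuv i * xuv j = xuv j * xuv i.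
Proof.
move=> hi hj /near_far far.
have := Qn_wpoly_eq (p := wpoly_mul (xpoly 0 1) (xpoly 2 3))
  (q := wpoly_mul (xpoly 2 3) (xpoly 0 1)) hi hj far.
by rewrite !peval_mul !peval_xpoly; apply; vm_compute.
Qed.

Lemma xuv_sq i : in_range i -> xuv i * xuv i = xuv i *+ 2 - 4%:R.
Proof.
move=> hi.
have := Qn_wpoly_eq (p := wpoly_mul (xpoly 0 1) (xpoly 0 1))
  (q := xpoly 0 1 ++ xpoly 0 1 ++ [:: (-4, [::])]) hi hi (near_refl i).
rewrite peval_mul !peval_cat peval_mono !peval_xpoly => ->; last by vm_compute.
by rewrite /gword big_nil mulr1 addrA mulr2n.
Qed.

Lemma xuv_yuv i : in_range i -> xuv i * yuv i = 4%:R /\ yuv i * xuv i = 4%:R.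
Proof.
move=> hi; split.
- have := Qn_wpoly_eq (p := wpoly_mul (xpoly 0 1) (ypoly 0 1)) (q := [:: (4, [::])])
    hi hi (near_refl i).
  rewrite peval_mul peval_mono peval_xpoly peval_ypoly /gword big_nil mulr1.
  by apply; vm_compute.
- have := Qn_wpoly_eq (p := wpoly_mul (ypoly 0 1) (xpoly 0 1)) (q := [:: (4, [::])])
    hi hi (near_refl i).
  rewrite peval_mul peval_mono peval_xpoly peval_ypoly /gword big_nil mulr1.
  by apply; vm_compute.
Qed.

Lemma u_xuv i : in_range i -> u i * xuv i = xuv i * (u i * v i).
Proof.
move=> hi.
have := Qn_wpoly_eq (p := wpoly_mul [:: (1, [:: 0%N])] (xpoly 0 1))
  (q := wpoly_mul (xpoly 0 1) [:: (1, [:: 0; 1]%N)]) hi hi (near_refl i).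
rewrite !peval_mul !peval_mono peval_xpoly /gword !big_cons big_nil /= !mul1r !mulr1.
by apply; vm_compute.
Qed.

Lemma v_xuv i : in_range i -> v i * xuv i = xuv i * u i.
Proof.
move=> hi.
have := Qn_wpoly_eq (p := wpoly_mul [:: (1, [:: 1%N])] (xpoly 0 1))
  (q := wpoly_mul (xpoly 0 1) [:: (1, [:: 0%N])]) hi hi (near_refl i).
rewrite !peval_mul !peval_mono peval_xpoly /gword !big_cons big_nil /= !mul1r !mulr1.
by apply; vm_compute.
Qed.

Lemma u_succ_xuv i : in_range i -> in_range i.+1 ->
  u i.+1 * xuv i = xuv i * (u i.+1 * v i).
Proof.
move=> hi hi1.
have := Qn_wpoly_eq (p := wpoly_mul [:: (1, [:: 2%N])] (xpoly 0 1))
  (q := wpoly_mul (xpoly 0 1) [:: (1, [:: 2; 1]%N)]) hi hi1 (near_succ i).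
rewrite !peval_mul !peval_mono peval_xpoly /gword !big_cons big_nil /= !mul1r !mulr1.
by apply; vm_compute.
Qed.

Lemma v_succ_xuv i : in_range i -> in_range i.+1 ->
  v i.+1 * xuv i = xuv i * - (u i * v i * v i.+1).
Proof.
move=> hi hi1.
have := Qn_wpoly_eq (p := wpoly_mul [:: (1, [:: 3%N])] (xpoly 0 1))
  (q := wpoly_mul (xpoly 0 1) [:: (-1, [:: 0; 1; 3]%N)]) hi hi1 (near_succ i).
rewrite !peval_mul !peval_mono peval_xpoly /gword !big_cons big_nil /= !mul1r !mulr1.
by rewrite mulN1r !mulrA; apply; vm_compute.
Qed.

End QnRelations.

Lemma q6_sq : q6 ^+ 2 = q6 - 1.
Proof.
have r2 : ('i * sqrtC 3%:R) ^+ 2 = - 3%:R :> algC by rewrite exprMn sqrCi sqrtCK mulN1r.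
apply/eqP; rewrite -subr_eq0 /q6.
have -> : ((1 + 'i * sqrtC 3%:R) / 2%:R) ^+ 2 - ((1 + 'i * sqrtC 3%:R) / 2%:R - 1)
  = (('i * sqrtC 3%:R) ^+ 2 + 3%:R) / 4%:R :> algC by field.
by rewrite r2 addNr mul0r.
Qed.

Lemma q6_root : q6 ^+ 2 - q6 + 1 = 0.
Proof. by rewrite q6_sq; ring. Qed.

Lemma q6_neq0 : q6 != 0.
Proof.
apply/eqP=> q0; have := q6_root.
by rewrite q0 expr2 mulr0 subrr add0r => /eqP; rewrite oner_eq0.
Qed.

Definition s_coef : algC := - (2%:R * q6)^-1.

Lemma s_coef_lin : s_coef * s_coef *+ 2 = (q6 - 1) * s_coef.
Proof.
apply/eqP; rewrite -subr_eq0.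
have -> : s_coef * s_coef *+ 2 - (q6 - 1) * s_coef = (q6 ^+ 2 - q6 + 1) / (2%:R * q6 ^+ 2).
  by rewrite /s_coef; field; rewrite q6_neq0.
by rewrite q6_root mul0r.
Qed.

Lemma s_coef_const : s_coef * s_coef * 4%:R = - q6.
Proof.
apply/eqP; rewrite -subr_eq0 opprK.
have -> : s_coef * s_coef * 4%:R + q6 = (q6 ^+ 2 - q6 + 1) * (q6 + 1) / q6 ^+ 2.
  by rewrite /s_coef; field; rewrite q6_neq0.
by rewrite q6_root !mul0r.
Qed.

Lemma s_coef_inv : s_coef * - (q6 / 2%:R) * 4%:R = 1.
Proof. by rewrite /s_coef; field; rewrite q6_neq0. Qed.

Lemma unitr_invE (R : unitRingType) (x y : R) :
  x * y = 1 -> y * x = 1 -> x \is a GRing.unit /\ x^-1 = y.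
Proof.
move=> xy yx; have xU : x \is a GRing.unit by apply/unitrP; exists y.
by split=> //; rewrite -(mulKr xU y) xy mulr1.
Qed.

Section ScaledGenerator.

Variable A : unitAlgType algC.

Lemma scalerMM (a b : algC) (x y : A) : (a *: x) * (b *: y) = (a * b) *: (x * y).
Proof. by rewrite -scalerAl -scalerAr scalerA. Qed.

Lemma s_coef_quadratic (x : A) : x * x = x *+ 2 - 4%:R ->
  (s_coef *: x - q6%:A) * (s_coef *: x + 1) = 0.
Proof.
move=> xx.
have ss : (s_coef *: x) * (s_coef *: x) = (q6 - 1) *: (s_coef *: x) + q6%:A.
  rewrite scalerMM xx scalerBr -scalerMnr scalerMnl s_coef_lin.
  have c4 : (s_coef * s_coef) *: (4%:R : A) = (- q6)%:A.
    by rewrite -s_coef_const -[RHS]scalerA scaler_nat.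
  by rewrite c4 -scalerA (scaleNr q6) opprK.
rewrite mulrBl !mulrDr !mulr1 ss mulr_algl scalerBl scale1r.
by rewrite [_ - _ + _ + _]addrAC subrK subrr.
Qed.

Lemma s_coef_inverse (x y : A) : x * y = 4%:R -> y * x = 4%:R ->
  s_coef *: x \is a GRing.unit /\ (s_coef *: x)^-1 = (- (q6 / 2%:R)) *: y.
Proof.
have c4 : (s_coef * - (q6 / 2%:R)) *: (4%:R : A) = 1.
  by rewrite -[4%:R : A]scaler_nat scalerA s_coef_inv scale1r.
move=> xy yx; apply: unitr_invE.
  by rewrite scalerMM xy c4.
by rewrite scalerMM yx mulrC c4.
Qed.

Lemma conj_scaled (a : algC) (x z w : A) : a *: x \is a GRing.unit ->
  z * x = x * w -> (a *: x)^-1 * z * (a *: x) = w.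
Proof. by move=> xU zx; rewrite -mulrA -scalerAr zx scalerAl mulKr. Qed.

End ScaledGenerator.

Theorem mainTheorem3 (n : nat) (hn : (2 <= n)%N) (A : unitAlgType algC)
    (u v : nat -> A) (hrel : Qn_rels n u v) :
  let s := s_gen u v in
  (forall i, (1 <= i)%N -> (i <= n - 2)%N ->
     s i * s i.+1 * s i = s i.+1 * s i * s i.+1) /\
  (forall i j, (1 <= i <= n.-1)%N -> (1 <= j <= n.-1)%N ->
     ((i.+2 <= j)%N || (j.+2 <= i)%N) -> s i * s j = s j * s i) /\
  (forall i, (1 <= i <= n.-1)%N -> (s i - q6%:A) * (s i + 1) = 0) /\
  (s 1%N \is a GRing.unit /\
   (s 1%N)^-1 = (- (q6 / 2%:R)) *: (1 - u 1%N - v 1%N - u 1%N * v 1%N)) /\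
  (s 1%N)^-1 * u 1%N * s 1%N = u 1%N * v 1%N /\
  (s 1%N)^-1 * v 1%N * s 1%N = u 1%N /\
  ((3 <= n)%N ->
     (s 1%N)^-1 * u 2%N * s 1%N = u 2%N * v 1%N /\
     (s 1%N)^-1 * v 2%N * s 1%N = - (u 1%N * v 1%N * v 2%N)).
Proof.
move=> s; have sE i : s i = s_coef *: xuv u v i by [].
have h1 : (1 <= 1 <= n.-1)%N by lia.
have [s1U s1V] := s_coef_inverse (xuv_yuv hrel h1).1 (xuv_yuv hrel h1).2.
split=> [i i1 i2|]; first by rewrite !sE !scalerMM (xuv_braid hrel) //; lia.
split=> [i j hi hj ij|]; first by rewrite !sE !scalerMM (xuv_comm hrel).
split=> [i hi|]; first by rewrite sE s_coef_quadratic // (xuv_sq hrel).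
split=> //; rewrite sE.
split; first by apply: conj_scaled => //; rewrite (u_xuv hrel).
split; first by apply: conj_scaled => //; rewrite (v_xuv hrel).
move=> n3; have h2 : (1 <= 2 <= n.-1)%N by lia.
by split; apply: conj_scaled => //; rewrite ?(u_succ_xuv hrel) ?(v_succ_xuv hrel).
Qed.
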